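(* Let $f \in \mathbb{C}[x_1,\ldots,x_n]$ be a homogeneous polynomial of degree $d$ whose dimension of partial derivatives is exactly $w$, and let $A_1,\ldots,A_n \in \mathbb{C}^{w\times w}$ be the multiplication tables of the apolar ideal $f^{\perp} \subseteq \mathbb{C}[t_1,\ldots,t_n]$ of $f(t_1,\ldots,t_n)$. Define $$G(\mathbf{x},\mathbf{t}) := \prod_{i=1}^{n}\left(\sum_{k=0}^{d} \frac{1}{k!} t_i^k x_i^k\right).$$ Then there exists a vector $\mathbf{v}\in\mathbb{C}^w$ such that $$\sum_{j\in[w]} v_j \cdot G(x_1,\ldots,x_n,A_1,\ldots,A_n)[1,j] = f(\mathbf{x}),$$ where $G(\mathbf{x},A_1,\ldots,A_n)$ is the $w\times w$ matrix with entries in $\mathbb{C}[\mathbf{x}]$ obtained by substituting $A_i$ for $t_i$ (and the identity matrix for $1$), and $[1,j]$ denotes its $(1,j)$ entry.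
   Context: The dimension of partial derivatives of $f$ is $\dim_{\mathbb{C}}\mathrm{span}_{\mathbb{C}}\{\partial_{\mathbf{e}} f : \mathbf{e}\in\mathbb{N}^n\}$, where $\partial_{\mathbf{e}}$ is the partial derivative with respect to the monomial $\mathbf{x}^{\mathbf{e}}$ (with $\mathbf{e}=\mathbf{0}$ giving $f$). For $g = \sum_{\mathbf{e}} g_{\mathbf{e}}\mathbf{t}^{\mathbf{e}}$, the derivative operator $D_g := \sum_{\mathbf{e}} g_{\mathbf{e}} \partial_{\mathbf{e}}$. The apolar ideal $f^{\perp}\subseteq\mathbb{C}[\mathbf{t}]$ is the ideal generated by $\{h\in\mathbb{C}[\mathbf{t}] : D_h f(\mathbf{t}) \equiv 0\}$. Fix the degree-wise lexicographic monomial order on $\mathbb{C}[t_1,\ldots,t_n]$ with $t_1\prec t_2\prec\cdots\prec t_n$. The normal set of $f^{\perp}$ is the set of monomials that are not the leading monomial of any element of $f^{\perp}$; for $g\in\mathbb{C}[\mathbf{t}]$, $[g]$ denotes the unique polynomial supported on the normal set with $g-[g]\in f^{\perp}$. The normal set is finite with exactly $w$ elements; list them as $1 = m_1\prec m_2\prec\cdots\prec m_w$. The multiplication tables are the $w\times w$ matrices $A_\ell$, $\ell\in[n]$, with $A_\ell(i,j) :=$ the coefficient of $m_j$ in $[t_\ell\cdot m_i]$; these matrices pairwise commute. *)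

From HB Require Import structures.
From mathcomp Require Import all_boot all_order all_algebra.
From mathcomp Require Import Rstruct.
From mathcomp.real_closed Require Import complex.
From mathcomp Require Import mpoly.

Set Implicit Arguments.
Unset Strict Implicit.
Unset Printing Implicit Defensive.

Import GRing.Theory.
Local Open Scope ring_scope.

Notation CC := ((Rdefinitions.R)[i]).

Section Apolar.
Variable n : nat.
Implicit Types (f g h p q : {mpoly CC[n]}) (m e : 'X_{1..n}).

Definition pderiv_mon e f : {mpoly CC[n]} := mderivm e f.

Definition Dop g f : {mpoly CC[n]} :=
  \sum_(m <- msupp g) g@_m *: pderiv_mon m f.

Definition in_span (S : {mpoly CC[n]} -> Prop) p : Prop :=
  exists r : seq (CC * {mpoly CC[n]}),
    (forall x, x \in r -> S x.2) /\ p = \sum_(x <- r) x.1 *: x.2.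

Definition span_dim (S : {mpoly CC[n]} -> Prop) (w : nat) : Prop :=
  exists b : 'I_w -> {mpoly CC[n]},
    [/\ forall i, in_span S (b i),
        forall c : 'I_w -> CC, \sum_(i < w) c i *: b i = 0 -> forall i, c i = 0
      & forall p, S p -> in_span (fun q => exists i, q = b i) p].

Definition pd_dim f (w : nat) : Prop :=
  span_dim (fun q => exists e, q = pderiv_mon e f) w.

Definition in_ideal (S : {mpoly CC[n]} -> Prop) h : Prop :=
  exists r : seq ({mpoly CC[n]} * {mpoly CC[n]}),
    (forall x, x \in r -> S x.2) /\ h = \sum_(x <- r) x.1 * x.2.

Definition apolar f h : Prop := in_ideal (fun g => Dop g f = 0) h.

(* degree-wise lexicographic order on monomials with t_1 < t_2 < ... < t_n
   (variable t_k is index k-1 : 'I_n) : strict comparison m1 < m2 *)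
Definition deglex_lt (m1 m2 : 'X_{1..n}) : bool :=
  (mdeg m1 < mdeg m2)%N ||
  ((mdeg m1 == mdeg m2) &&
   [exists i : 'I_n, (m1 i < m2 i)%N &&
                      [forall j : 'I_n, (i < j)%N ==> (m1 j == m2 j)]]).

Definition is_lead_mon g m : Prop :=
  g@_m != 0 /\ forall m', g@_m' != 0 -> m' != m -> deglex_lt m' m.

Definition normal_set f m : Prop :=
  ~ exists g, apolar f g /\ is_lead_mon g m.

Definition is_normal_form f g p : Prop :=
  (forall m, p@_m != 0 -> normal_set f m) /\ apolar f (g - p).

Definition Gmat (w d : nat) (A : 'I_n -> 'M[CC]_w) : 'M[{mpoly CC[n]}]_w :=
  \prod_(i < n) \sum_(k < d.+1)
     ((k`!%:R)^-1 *: 'X_i ^+ k) *: map_mx (fun c : CC => c%:MP_[n]) (A i ^+ k).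

End Apolar.

From HB Require Import structures.
From mathcomp Require Import all_boot all_order all_algebra.
From mathcomp Require Import Rstruct.
From mathcomp.real_closed Require Import complex.
From mathcomp Require Import mpoly bigenough.
From mathcomp.multinomials Require Import ssrcomplements.

(* Since D_(gh) = D_g o D_h and every element of f^perp kills f, the table A_l
   expresses D_(t_l m_i) f in the family (D_(m_j) f)_j, and multiplicativity
   extends this to all monomials: as m_1 = 1,
   D_(t^k) f = sum_j (prod_l A_l^(k_l))[1,j] D_(m_j) f.  Comparing constant
   terms gives k! f_k = sum_j (prod_l A_l^(k_l))[1,j] v_j, where v_j is the
   constant term of D_(m_j) f.  Finally G(x, A) expands as the sum over all k
   with k_l <= d of x^k/k! prod_l A_l^(k_l); this range of k contains the
   support of the degree-d form f, so sum_j v_j G[1,j] = sum_k f_k x^k = f. *)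

Set Implicit Arguments.
Unset Strict Implicit.
Unset Printing Implicit Defensive.

Import GRing.Theory BigEnough.
Local Open Scope ring_scope.

Lemma mcoeff0_mderivm (R : ringType) n m (p : {mpoly R[n]}) :
  (mderivm m p)@_0%MM = p@_m *+ \prod_(i < n) (m i)`!.
Proof.
rewrite mcoeff_mderivm addm0; congr (_ *+ _).
by apply: eq_bigr => i _; rewrite ffactnn.
Qed.

Section Apolarity.
Variable n : nat.
Implicit Types (f g h p : {mpoly CC[n]}) (m : 'X_{1..n}).

Lemma Dop_is_linear g : linear (Dop g).
Proof.
move=> c f1 f2; rewrite /Dop /pderiv_mon scaler_sumr -big_split /=.
by apply: eq_bigr => m _; rewrite linearP scalerDr !scalerA mulrC.
Qed.

HB.instance Definition _ g :=
  GRing.isLinear.Build CC {mpoly CC[n]} {mpoly CC[n]} _ (Dop g) (Dop_is_linear g).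

Lemma DopwE K g f : (msize g <= K)%N ->
  Dop g f = \sum_(m : 'X_{1..n < K}) g@_m *: mderivm m f.
Proof.
move=> le_gK; rewrite /Dop /pderiv_mon (big_mksub 'X_{1..n < K}) ?msupp_uniq //=.
  by rewrite big_rmcond //= => m /memN_msupp_eq0 ->; rewrite scale0r.
by move=> m /msize_mdeg_lt /leq_trans; apply.
Qed.

Lemma DopDl f g1 g2 : Dop (g1 + g2) f = Dop g1 f + Dop g2 f.
Proof.
pose_big_enough K; first rewrite !(@DopwE K) // -big_split /=.
  by apply: eq_bigr => m _; rewrite mcoeffD scalerDl.
by close.
Qed.

Lemma DopZl f c g : Dop (c *: g) f = c *: Dop g f.
Proof.
pose_big_enough K; first rewrite !(@DopwE K) // scaler_sumr.
  by apply: eq_bigr => m _; rewrite mcoeffZ scalerA.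
by close.
Qed.

Lemma Dop0l f : Dop 0 f = 0.
Proof. by rewrite /Dop msupp0 big_nil. Qed.

Lemma DopBl f g1 g2 : Dop (g1 - g2) f = Dop g1 f - Dop g2 f.
Proof. by rewrite DopDl -scaleN1r DopZl scaleN1r. Qed.

Lemma Dop_suml f I (r : seq I) (P : pred I) (F : I -> {mpoly CC[n]}) :
  Dop (\sum_(i <- r | P i) F i) f = \sum_(i <- r | P i) Dop (F i) f.
Proof.
elim/big_rec2: _ => [|i g1 g2 _ <-]; first exact: Dop0l.
exact: DopDl.
Qed.

Lemma DopX m f : Dop 'X_[m] f = mderivm m f.
Proof. by rewrite /Dop msuppX big_seq1 mcoeffX eqxx scale1r. Qed.

Lemma DopC c f : Dop c%:MP f = c *: f.
Proof. by rewrite -[c%:MP]mulr1 -mpolyX0 mul_mpolyC DopZl DopX mderivm0m. Qed.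

Lemma DopM g h f : Dop (g * h) f = Dop g (Dop h f).
Proof.
rewrite mpolyME big_allpairs Dop_suml {3}/Dop; apply: eq_bigr => m1 _.
rewrite Dop_suml /pderiv_mon linear_sum scaler_sumr; apply: eq_bigr => m2 _.
by rewrite DopZl DopX linearZ /= scalerA addmC mderivmDm.
Qed.

Lemma apolar_Dop_eq0 f h : apolar f h -> Dop h f = 0.
Proof.
case=> r [rS ->]; rewrite Dop_suml big_seq big1 // => x /rS Dx.
by rewrite DopM Dx linear0.
Qed.

Lemma normal_form_Dop f g p : is_normal_form f g p -> Dop g f = Dop p f.
Proof. by case=> _ /apolar_Dop_eq0/eqP; rewrite DopBl subr_eq0 => /eqP. Qed.

Lemma deglex_ltxx m : deglex_lt m m = false.
Proof.
rewrite /deglex_lt ltnn eqxx /=; apply/existsP => -[i /andP[]].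
by rewrite ltnn.
Qed.

Lemma deglex_lt0 m : deglex_lt m 0%MM = false.
Proof.
rewrite /deglex_lt mdeg0 ltn0 /=; apply/negbTE/nandP; right.
by apply/existsP => -[i /andP[]]; rewrite mnm0E ltn0.
Qed.

Lemma lead_mon0_const g : is_lead_mon g 0%MM -> g = (g@_0%MM)%:MP.
Proof.
case=> _ lead_g; apply/mpolyP => m; rewrite mcoeffC.
have [->|m_neq0] := eqVneq m 0%MM; first by rewrite mulr1.
rewrite mulr0; apply/eqP; apply: contraT => gm_neq0.
by rewrite -(deglex_lt0 m) lead_g.
Qed.

Lemma normal_set0 f : f != 0 -> normal_set f 0%MM.
Proof.
move=> f_neq0 [g [apolar_g lead_g]]; have [g0_neq0 _] := lead_g.
move: (apolar_Dop_eq0 apolar_g); rewrite (lead_mon0_const lead_g) DopC.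
by move/eqP; rewrite scaler_eq0 (negbTE g0_neq0) (negbTE f_neq0).
Qed.

Lemma pd_dim0 w : pd_dim (0 : {mpoly CC[n]}) w -> w = 0%N.
Proof.
case: w => // w [b [b_span b_free _]].
have b0 i : b i = 0.
  case: (b_span i) => r [rD ->]; rewrite big_seq big1 // => x /rD [e ->].
  by rewrite /pderiv_mon linear0 scaler0.
have := b_free (fun _ => 1) _ ord0; rewrite big1 => [/(_ erefl)/eqP|i _].
  by rewrite oner_eq0.
by rewrite b0 scaler0.
Qed.

End Apolarity.

Lemma mpolyE_enum (R : ringType) n (I : finType) (e : I -> 'X_{1..n})
    (p : {mpoly R[n]}) :
  injective e -> (forall m, p@_m != 0 -> exists i, e i = m) ->
  p = \sum_(i : I) p@_(e i) *: 'X_[e i].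
Proof.
move=> e_inj p_in_e; apply/mpolyP => m; rewrite raddf_sum /=.
under eq_bigr => i _ do rewrite mcoeffZ mcoeffX.
have [pm0|pm_neq0] := eqVneq p@_m 0.
  by rewrite pm0 big1 // => i _; case: eqP => [->|]; rewrite ?pm0 ?mul0r ?mulr0.
have [i <-] := p_in_e m pm_neq0.
rewrite (bigD1 i) //= eqxx mulr1 big1 ?addr0 // => j j_neq_i.
by rewrite (inj_eq e_inj) (negbTE j_neq_i) mulr0.
Qed.

Section Box.
Variables n d : nat.

Definition box_mnm (g : {ffun 'I_n -> 'I_d.+1}) : 'X_{1..n} :=
  [multinom (g i : nat) | i < n].

Lemma box_mnm_inj : injective box_mnm.
Proof.
move=> g1 g2 /mnmP eq_g; apply/ffunP => i; apply/val_inj.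
by have := eq_g i; rewrite !mnmE.
Qed.

Lemma dhomog_box (R : ringType) (p : {mpoly R[n]}) m :
  p \is d.-homog -> p@_m != 0 -> exists g, box_mnm g = m.
Proof.
move=> p_homog pm_neq0.
have mdeg_m : mdeg m = d by apply: (dhomog_mf p_homog); rewrite mcoeff_msupp.
have m_box i : (m i < d.+1)%N by rewrite ltnS -mdeg_m mdegE (bigD1 i) ?leq_addr.
by exists [ffun i => Ordinal (m_box i)]; apply/mnmP => i; rewrite mnmE ffunE.
Qed.

(* The algebra structure on square matrices is only declared for sizes w.+1. *)
Lemma Gmat_coefE w (A : 'I_n -> 'M[CC]_w.+1) i j :
  Gmat d A i j = \sum_(g : {ffun 'I_n -> 'I_d.+1})
    ((\prod_l (g l)`!%:R^-1) * (\prod_l A l ^+ g l) i j) *: 'X_[box_mnm g].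
Proof.
rewrite /Gmat bigA_distr_bigA summxE; apply: eq_bigr => g _.
have -> : 'X_[box_mnm g] = \prod_l 'X_l ^+ g l :> {mpoly CC[n]}.
  by rewrite mpolyXE_id; apply: eq_bigr => l _; rewrite mnmE.
by rewrite !scaler_prod -rmorph_prod !mxE mulrC mul_mpolyC scalerA mulrC.
Qed.

End Box.

Section MultiplicationTables.
Variables (n w : nat) (f : {mpoly CC[n]}).
Variables (ms : 'I_w -> 'X_{1..n}) (A : 'I_n -> 'M[CC]_w).
Hypothesis ms_sorted : forall i j : 'I_w, (i < j)%N -> deglex_lt (ms i) (ms j).
Hypothesis ms_normal : forall m, normal_set f m <-> exists i, ms i = m.
Hypothesis A_table : forall (l : 'I_n) (i : 'I_w), exists p,
  is_normal_form f ('X_l * 'X_[ms i]) p /\ forall j, A l i j = p@_(ms j).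

Lemma ms_inj : injective ms.
Proof.
move=> i j eq_ij; apply/val_inj/eqP; case: ltngtP => // lt_ij;
  by have := ms_sorted lt_ij; rewrite eq_ij deglex_ltxx.
Qed.

Lemma ms_first (hw : (0 < w)%N) : f != 0 -> ms (Ordinal hw) = 0%MM.
Proof.
move=> f_neq0; have [i ms_i] := (ms_normal 0%MM).1 (normal_set0 f_neq0).
have [i0|i_gt0] := posnP i; first by rewrite (_ : Ordinal hw = i) //; apply: val_inj.
by have := ms_sorted (i_gt0 : (Ordinal hw < i)%N); rewrite ms_i deglex_lt0.
Qed.

Definition represents (M : 'M[CC]_w) (h : {mpoly CC[n]}) :=
  forall i, Dop (h * 'X_[ms i]) f = \sum_j M i j *: Dop 'X_[ms j] f.

Lemma represents1 : represents 1 1.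
Proof.
move=> i; rewrite mul1r (bigD1 i) //= mxE eqxx scale1r big1 ?addr0 // => j j_neq_i.
by rewrite mxE eq_sym (negbTE j_neq_i) scale0r.
Qed.

Lemma representsM M1 M2 h1 h2 :
  represents M1 h1 -> represents M2 h2 -> represents (M1 * M2) (h1 * h2).
Proof.
move=> rep1 rep2 i; rewrite -mulrA mulrCA DopM rep1 linear_sum /=.
under eq_bigr => j _ do rewrite linearZ /= -DopM rep2 scaler_sumr.
rewrite exchange_big /=; apply: eq_bigr => k _.
by rewrite -mulmxE mxE scaler_suml; apply: eq_bigr => j _; rewrite scalerA.
Qed.

Lemma representsX M h k : represents M h -> represents (M ^+ k) (h ^+ k).
Proof.
move=> rep; elim: k => [|k IHk]; first by rewrite !expr0; exact: represents1.
by rewrite !exprS; apply: representsM.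
Qed.

Lemma represents_table l : represents (A l) 'X_l.
Proof.
move=> i; have [p [nf_p A_p]] := A_table l i.
have p_in_ms m : p@_m != 0 -> exists j, ms j = m by move/(nf_p.1 m)/ms_normal.
rewrite (normal_form_Dop nf_p) {1}(mpolyE_enum ms_inj p_in_ms) Dop_suml.
by apply: eq_bigr => j _; rewrite DopZl A_p.
Qed.

Lemma represents_prod_table (k : 'I_n -> nat) :
  represents (\prod_l A l ^+ k l) (\prod_l 'X_l ^+ k l).
Proof.
apply: (big_rec2 represents); first exact: represents1.
by move=> l M h _; apply/representsM/representsX/represents_table.
Qed.

Definition weight j := (Dop 'X_[ms j] f)@_0%MM.

Lemma mcoeff_tableMn (hw : (0 < w)%N) (k : 'I_n -> nat) : f != 0 ->
  f@_[multinom k l | l < n] *+ \prod_l (k l)`! =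
  \sum_j (\prod_l A l ^+ k l) (Ordinal hw) j * weight j.
Proof.
move=> f_neq0; have := congr1 (mcoeff 0%MM) (represents_prod_table k (Ordinal hw)).
have -> : \prod_l 'X_l ^+ k l = 'X_[[multinom k l | l < n]] :> {mpoly CC[n]}.
  by rewrite mpolyXE_id; apply: eq_bigr => l _; rewrite mnmE.
rewrite ms_first // mpolyX0 mulr1 DopX mcoeff0_mderivm raddf_sum /=.
under [in RHS]eq_bigr => j _ do rewrite mcoeffZ.
by move <-; congr (_ *+ _); apply: eq_bigr => l _; rewrite mnmE.
Qed.

Lemma mcoeff_tableE (hw : (0 < w)%N) (k : 'I_n -> nat) : f != 0 ->
  f@_[multinom k l | l < n] =
  \sum_j weight j * ((\prod_l (k l)`!%:R^-1) * (\prod_l A l ^+ k l) (Ordinal hw) j).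
Proof.
move=> f_neq0; under [RHS]eq_bigr => j _ do rewrite mulrCA [weight _ * _]mulrC.
rewrite -mulr_sumr -(mcoeff_tableMn hw k f_neq0) -mulr_natl mulrA.
rewrite natr_prod -big_split /= big1 ?mul1r // => l _.
by rewrite mulVf // Num.Theory.pnatr_eq0 -lt0n fact_gt0.
Qed.

End MultiplicationTables.

Theorem lemma3p5 (n d w : nat) (hw : (0 < w)%N) (f : {mpoly CC[n]})
  (ms : 'I_w -> 'X_{1..n}) (A : 'I_n -> 'M[CC]_w) :
  f \is d.-homog ->
  pd_dim f w ->
  (* m_1 < m_2 < ... < m_w enumerate the normal set of f^perp *)
  (forall i j : 'I_w, (i < j)%N -> deglex_lt (ms i) (ms j)) ->
  (forall m, normal_set f m <-> exists i, ms i = m) ->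
  (* A_l(i,j) = coefficient of m_j in [t_l * m_i] *)
  (forall (l : 'I_n) (i : 'I_w), exists p,
      is_normal_form f ('X_l * 'X_[ms i]) p /\
      forall j, A l i j = p@_(ms j)) ->
  exists v : 'I_w -> CC,
    \sum_(j < w) v j *: Gmat d A (Ordinal hw) j = f.
Proof.
case: w hw ms A => // w hw ms A f_homog f_pd ms_sorted ms_normal A_table.
have f_neq0 : f != 0 by apply/eqP => f0; move: f_pd; rewrite f0 => /pd_dim0.
exists (weight f ms).
rewrite [RHS](mpolyE_enum (@box_mnm_inj n d) (fun m => dhomog_box f_homog)).
under eq_bigr => j _ do rewrite Gmat_coefE scaler_sumr.
rewrite exchange_big /=; apply: eq_bigr => g _.
under eq_bigr => j _ do rewrite scalerA.
by rewrite -scaler_suml (mcoeff_tableE ms_sorted ms_normal A_table hw).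
Qed.
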